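(* For every $n\ge2$, $$\sum_{k=1}^{n-1}k^2\,d_{k,n}=(4n-1)(2n-3)!!-3(2n-2)!!.$$
   Context: $\mathcal{T}_n$ is the set of fully resolved (binary) rooted trees with leaves bijectively labeled by $\{1,\dots,n\}$, and $d_{k,n}=|\{T\in\mathcal{T}_n:\delta_T(1)=k\}|$, where $\delta_T(1)$ is the depth (number of arcs from the root) of leaf $1$ in $T$. Double factorials: $(2m-1)!!=(2m-1)(2m-3)\cdots1$, $(2m)!!=(2m)(2m-2)\cdots2$, $0!!=1$. *)

From HB Require Import structures.
From mathcomp Require Import all_boot all_order all_algebra.
Set Implicit Arguments. Unset Strict Implicit. Unset Printing Implicit Defensive.

Inductive tree := Leaf of nat | Node of tree & tree.

Fixpoint tree_eqb (t u : tree) : bool :=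
  match t, u with
  | Leaf a, Leaf b => a == b
  | Node l r, Node l' r' => tree_eqb l l' && tree_eqb r r'
  | _, _ => false
  end.

Lemma tree_eqP : Equality.axiom tree_eqb.
Proof.
elim=> [a|l IHl r IHr] [b|l' r'] /=; try by constructor.
- by apply: (iffP eqP) => [->|[]].
- by case: (IHl l') => [<-|Hn]; case: (IHr r') => [<-|Hn'];
     constructor => //; case.
Qed.

HB.instance Definition _ := hasDecEq.Build tree tree_eqP.

Fixpoint leaves (t : tree) : seq nat :=
  match t with Leaf a => [:: a] | Node l r => leaves l ++ leaves r end.

Definition minleaf (t : tree) : nat := foldr minn (head 0 (leaves t)) (leaves t).

(* Children of a node are unordered: we pick the canonical orientation in
   which the left child contains the smaller minimum label. With distinct
   labels this gives a bijection between ordered trees in canonical form and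
   (unordered) rooted binary trees. *)
Fixpoint canon (t : tree) : bool :=
  match t with
  | Leaf _ => true
  | Node l r => [&& minleaf l < minleaf r, canon l & canon r]
  end.

(* t is in T_n: a fully resolved rooted tree whose leaves are bijectively
   labelled by {1,...,n}. *)
Definition in_Tn (n : nat) (t : tree) : bool :=
  perm_eq (leaves t) (iota 1 n) && canon t.

Fixpoint depth (x : nat) (t : tree) : nat :=
  match t with
  | Leaf _ => 0
  | Node l r => if x \in leaves l then (depth x l).+1 else (depth x r).+1
  end.

Definition enum_Tn (n : nat) (s : seq tree) : Prop :=
  uniq s /\ forall t, (t \in s) = in_Tn n t.

Definition dkn (s : seq tree) (k : nat) : nat :=
  count (fun t => depth 1 t == k) s.

Fixpoint dfact (m : nat) : nat :=
  match m with
  | 0 => 1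
  | 1 => 1
  | (p.+2) as q => q * dfact p
  end.

From HB Require Import structures.
From mathcomp Require Import all_boot all_order all_algebra.
From mathcomp Require Import ring zify.
Import GRing.Theory.

Set Implicit Arguments.
Unset Strict Implicit.
Unset Printing Implicit Defensive.

(* Every tree of T_(n+1) arises from exactly one tree u of T_n by grafting
   the leaf n+1 onto one of the 2n-1 edges of u (counting an edge above the
   root): the result is canonical because n+1 is the largest label, and
   pruning n+1 undoes the graft.  The graft lengthens the path to leaf 1
   exactly for the delta_u(1)+1 edges on that path, so the moments
   M_j(n) = sum_T delta_T(1)^j satisfy
     M_j(n+1) = sum_u ((delta+1)^(j+1) + (2n-2-delta) delta^j).
   For j = 0, 1, 2 this gives M_0(n+1) = (2n-1) M_0(n),
   M_1(n+1) = 2n M_1(n) + M_0(n) and M_2(n+1) = (2n+1) M_2(n) + 3 M_1(n) + M_0(n),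
   solved by M_0 = (2n-3)!!, M_1 = (2n-2)!! - (2n-3)!! and
   M_2 = (4n-1)(2n-3)!! - 3(2n-2)!!. *)

Lemma size_leaves_gt0 t : 0 < size (leaves t).
Proof. elim: t => //= l IHl r IHr; rewrite size_cat; lia. Qed.

Lemma foldr_minn_mem c s : foldr minn c s \in c :: s.
Proof.
elim: s => [|a s IH] /=; first exact: mem_head.
rewrite /minn; case: ifP => _; first by rewrite !inE eqxx orbT.
by move: IH; rewrite !inE => /orP [->|->]; rewrite ?orbT.
Qed.

Lemma foldr_minn_le c s y : y \in s -> foldr minn c s <= y.
Proof.
elim: s => [|a s IH] //=; rewrite inE geq_min => /orP [/eqP->|/IH->].
- by rewrite leqnn.
- by rewrite orbT.
Qed.

Lemma minleaf_mem t : minleaf t \in leaves t.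
Proof.
rewrite /minleaf; case: (leaves t) (size_leaves_gt0 t) => [|a s] // _.
by have := foldr_minn_mem a (a :: s); rewrite in_cons => /orP [/eqP->|//]; exact: mem_head.
Qed.

Lemma minleaf_le t y : y \in leaves t -> minleaf t <= y.
Proof. exact: foldr_minn_le. Qed.

Lemma minleaf_leaf a : minleaf (Leaf a) = a.
Proof. by rewrite /minleaf /= minnn. Qed.

Lemma minleaf_extend a b m :
  (forall y, (y \in leaves a) = (y \in leaves b) || (y == m)) ->
  (forall y, y \in leaves b -> y < m) -> minleaf a = minleaf b.
Proof.
move=> leaves_ab lt_bm; have := minleaf_mem a; rewrite leaves_ab.
have le_ab : minleaf a <= minleaf b by apply: minleaf_le; rewrite leaves_ab minleaf_mem.
case/orP => [/minleaf_le le_ba|/eqP eq_am]; first by apply/eqP; rewrite eqn_leq le_ab.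
by have := lt_bm _ (minleaf_mem b); lia.
Qed.

Fixpoint graft (m : nat) (u : tree) : seq tree :=
  Node u (Leaf m) ::
  match u with
  | Leaf _ => [::]
  | Node l r => [seq Node l' r | l' <- graft m l] ++ [seq Node l r' | r' <- graft m r]
  end.

Fixpoint prune (m : nat) (t : tree) : tree :=
  match t with
  | Leaf a => Leaf a
  | Node l r => if l == Leaf m then r else if r == Leaf m then l
                else if m \in leaves l then Node (prune m l) r else Node l (prune m r)
  end.

Lemma graft_root m u : Node u (Leaf m) \in graft m u.
Proof. by case: u => *; rewrite mem_head. Qed.

Lemma graft_neq_leaf m u t a : t \in graft m u -> t != Leaf a.
Proof.
case: u => [b|l r] /=; rewrite in_cons => /orP [/eqP->//|] //.
by rewrite mem_cat => /orP [] /mapP [x _ ->].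
Qed.

Lemma perm_leaves_graft m u t :
  t \in graft m u -> perm_eq (leaves t) (rcons (leaves u) m).
Proof.
elim: u t => [a|l IHl r IHr] t /=; rewrite in_cons => /orP [/eqP->|] /=;
  rewrite ?cats1 //.
rewrite mem_cat => /orP [] /mapP [x /= x_l ->] /=.
- apply: perm_trans (_ : perm_eq _ (rcons (leaves l) m ++ leaves r)) _.
    by rewrite perm_cat2r IHl.
  by rewrite -!cats1 -!catA perm_cat2l perm_catC.
- apply: perm_trans (_ : perm_eq _ (leaves l ++ rcons (leaves r) m)) _.
    by rewrite perm_cat2l IHr.
  by rewrite -!cats1 -!catA.
Qed.

Lemma mem_leaves_graft m u t y : t \in graft m u ->
  (y \in leaves t) = (y \in leaves u) || (y == m).
Proof. by move/perm_leaves_graft/perm_mem => ->; rewrite mem_rcons inE orbC. Qed.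

Lemma size_graft m u : (size (graft m u)).+1 = (size (leaves u)).*2.
Proof.
elim: u => [a|l IHl r IHr] //=.
by rewrite size_cat !size_map size_cat; lia.
Qed.

Lemma canon_graft m u t : canon u -> (forall y, y \in leaves u -> y < m) ->
  t \in graft m u -> canon t.
Proof.
elim: u t => [a|l IHl r IHr] t /= canon_u lt_um;
  rewrite in_cons => /orP [/eqP->|] /=.
- by rewrite !minleaf_leaf lt_um ?mem_head.
- by [].
- by rewrite minleaf_leaf canon_u andbT lt_um ?(minleaf_mem (Node l r)).
case/and3P: canon_u => lt_lr canon_l canon_r.
have lt_lm y : y \in leaves l -> y < m by move=> y_l; rewrite lt_um ?mem_cat ?y_l.
have lt_rm y : y \in leaves r -> y < m by move=> y_r; rewrite lt_um ?mem_cat ?y_r ?orbT.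
rewrite mem_cat => /orP [] /mapP [x x_graft ->] /=.
- rewrite (@minleaf_extend x _ m _ lt_lm); last by move=> y; apply: mem_leaves_graft x_graft.
  by rewrite lt_lr canon_r (IHl _ canon_l lt_lm x_graft).
- rewrite (@minleaf_extend x _ m _ lt_rm); last by move=> y; apply: mem_leaves_graft x_graft.
  by rewrite lt_lr canon_l (IHr _ canon_r lt_rm x_graft).
Qed.

Lemma minleaf_graft m u t : t \in graft m u -> uniq (leaves t) ->
  (forall y, y \in leaves t -> y <= m) -> minleaf t = minleaf u.
Proof.
move=> t_graft uniq_t le_tm; have perm_tu := perm_leaves_graft t_graft.
have m_u : m \notin leaves u.
  by move: uniq_t; rewrite (perm_uniq perm_tu) rcons_uniq => /andP [].
apply: (@minleaf_extend _ _ m) => [y|y y_u]; first exact: mem_leaves_graft.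
have := le_tm y; rewrite (mem_leaves_graft y t_graft) y_u ltn_neqAle => -> //.
by rewrite andbT; apply: contraNneq m_u => <-.
Qed.

Lemma graft_uniq m u : m \notin leaves u -> uniq (graft m u).
Proof.
elim: u => [a|l IHl r IHr] //=; rewrite mem_cat negb_or => /andP [m_l m_r].
have leaf_m_r : r != Leaf m by apply: contraNneq m_r => ->; rewrite mem_head.
rewrite cat_uniq !map_inj_uniq ?IHl ?IHr //; try by move=> ? ? [].
rewrite mem_cat negb_or /= andbT -andbA; apply/and3P; split.
- by apply/mapP => -[x _ [_ eq_r]]; rewrite eq_r eqxx in leaf_m_r.
- by apply/mapP => -[x /(graft_neq_leaf m) x_neq [_ eq_x]]; rewrite -eq_x eqxx in x_neq.
- apply/hasPn => _ /mapP [x x_graft ->]; apply/mapP => -[y y_graft [eq_ly _]].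
  by move: m_l; rewrite eq_ly (mem_leaves_graft m y_graft) eqxx orbT.
Qed.

Lemma prune_graft m u t : m \notin leaves u -> t \in graft m u -> prune m t = u.
Proof.
have leaf_m_neq v : m \notin leaves v -> (v == Leaf m) = false.
  by move=> m_v; apply/negbTE; apply: contraNneq m_v => ->; rewrite mem_head.
have prune_root v : m \notin leaves v -> prune m (Node v (Leaf m)) = v.
  by move=> m_v; rewrite /= leaf_m_neq // eqxx.
elim: u t => [a|l IHl r IHr] t m_u;
  rewrite in_cons => /orP [/eqP->|]; rewrite ?prune_root //.
move: m_u; rewrite /= mem_cat negb_or => /andP [m_l m_r].
rewrite mem_cat => /orP [] /mapP [x x_graft ->] /=.
- rewrite (negbTE (graft_neq_leaf m x_graft)) leaf_m_neq //.
  by rewrite (mem_leaves_graft m x_graft) eqxx orbT (IHl _ m_l x_graft).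
- rewrite leaf_m_neq // (negbTE (graft_neq_leaf m x_graft)).
  by rewrite (negbTE m_l) (IHr _ m_r x_graft).
Qed.

Lemma canon_prune_graft m t :
  canon t -> uniq (leaves t) -> m \in leaves t -> t != Leaf m ->
  (forall y, y \in leaves t -> y <= m) ->
  canon (prune m t) /\ t \in graft m (prune m t).
Proof.
elim: t => [a|l IHl r IHr] /=; first by move=> _ _; rewrite inE => /eqP-> /eqP.
case/and3P=> lt_lr canon_l canon_r; rewrite cat_uniq mem_cat.
case/and3P=> uniq_l _ uniq_r m_lr _ le_tm.
have le_lm y : y \in leaves l -> y <= m by move=> y_l; rewrite le_tm ?mem_cat ?y_l.
have le_rm y : y \in leaves r -> y <= m by move=> y_r; rewrite le_tm ?mem_cat ?y_r ?orbT.
have l_neq : l != Leaf m.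
  apply: contraTneq lt_lr => ->; rewrite minleaf_leaf -leqNgt.
  exact/le_rm/minleaf_mem.
rewrite (negbTE l_neq); case: eqP => [->|/eqP r_neq]; first by rewrite graft_root.
case: ifP => m_l.
- have [canon_pl l_graft] := IHl canon_l uniq_l m_l l_neq le_lm.
  split; first by rewrite /= -(minleaf_graft l_graft uniq_l le_lm) lt_lr canon_pl.
  by rewrite /= in_cons mem_cat (map_f (fun l' => Node l' r) l_graft) /= orbT.
- have m_r : m \in leaves r by rewrite m_l in m_lr.
  have [canon_pr r_graft] := IHr canon_r uniq_r m_r r_neq le_rm.
  split; first by rewrite /= -(minleaf_graft r_graft uniq_r le_rm) lt_lr canon_l.
  by rewrite /= in_cons mem_cat (map_f (fun r' => Node l r') r_graft) !orbT.
Qed.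

Fixpoint trees (n : nat) : seq tree :=
  match n with
  | 0 => [::]
  | 1 => [:: Leaf 1]
  | n'.+1 => flatten [seq graft n'.+1 u | u <- trees n']
  end.

Lemma iota1S n : iota 1 n.+1 = rcons (iota 1 n) n.+1.
Proof. by rewrite -cats1 -{1}(addn1 n) iotaD add1n. Qed.

Lemma in_Tn_leaves n t y : in_Tn n t -> (y \in leaves t) = (0 < y <= n).
Proof. by case/andP=> /perm_mem-> _; rewrite mem_iota add1n. Qed.

Lemma in_Tn1 t : in_Tn 1 t = (t == Leaf 1).
Proof.
apply/idP/eqP => [/andP [perm_t _]|->] //.
case: t perm_t => [a|l r] /= perm_t.
  by have := perm_mem perm_t a; rewrite !inE eqxx => /esym /eqP->.
have := perm_size perm_t; rewrite size_cat /=.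
by have := size_leaves_gt0 l; have := size_leaves_gt0 r; lia.
Qed.

Lemma treesSS n : trees n.+2 = flatten [seq graft n.+2 u | u <- trees n.+1].
Proof. by []. Qed.

Lemma in_Tn_graft n u t : in_Tn n u -> t \in graft n.+1 u -> in_Tn n.+1 t.
Proof.
move=> Tn_u t_graft; have /andP [perm_u canon_u] := Tn_u.
rewrite /in_Tn (canon_graft canon_u _ t_graft) => [|y]; last first.
  by rewrite (in_Tn_leaves _ Tn_u) => /andP [].
rewrite andbT iota1S; apply: perm_trans (perm_leaves_graft t_graft) _.
by rewrite -!cats1 perm_cat2r.
Qed.

Lemma in_Tn_prune n t : in_Tn n.+2 t ->
  in_Tn n.+1 (prune n.+2 t) /\ t \in graft n.+2 (prune n.+2 t).
Proof.
move=> Tn_t; have /andP [perm_t canon_t] := Tn_t.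
have leaves_t y : (y \in leaves t) = (0 < y <= n.+2) := in_Tn_leaves y Tn_t.
have t_neq : t != Leaf n.+2.
  by apply/eqP => eq_t; have := perm_size perm_t; rewrite eq_t size_iota.
have [|||canon_p t_graft] := canon_prune_graft canon_t _ _ t_neq.
- by rewrite (perm_uniq perm_t) iota_uniq.
- by rewrite leaves_t leqnn.
- by move=> y; rewrite leaves_t => /andP [].
split=> //; rewrite /in_Tn canon_p andbT -(perm_cat2r [:: n.+2]) !cats1 -iota1S.
by apply: perm_trans perm_t; rewrite perm_sym (perm_leaves_graft t_graft).
Qed.

Lemma mem_trees n t : (t \in trees n.+1) = in_Tn n.+1 t.
Proof.
elim: n t => [|n IHn] t; first by rewrite in_Tn1 inE.
rewrite treesSS; apply/flatten_mapP/idP => [[u u_trees t_graft]|Tn_t].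
  by apply: in_Tn_graft t_graft; rewrite -IHn.
have [Tn_p t_graft] := in_Tn_prune Tn_t.
by exists (prune n.+2 t); rewrite ?IHn.
Qed.

Lemma flatten_map_uniq (S T : eqType) (f : S -> seq T) (g : T -> S) (s : seq S) :
  uniq s -> {in s, forall x, uniq (f x)} ->
  {in s, forall x, {in f x, forall y, g y = x}} -> uniq (flatten (map f s)).
Proof.
elim: s => [|x s IHs] //= /andP [x_s uniq_s] uniq_f gK.
rewrite cat_uniq uniq_f ?mem_head // IHs //; last 2 first.
- by move=> z z_s; apply: uniq_f; rewrite inE z_s orbT.
- by move=> z z_s; apply: gK; rewrite inE z_s orbT.
rewrite andbT; apply/hasPn => y /flatten_mapP [z z_s y_fz]; apply/negP => y_fx.
have gy_z : g y = z by apply: gK y_fz; rewrite inE z_s orbT.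
have gy_x : g y = x by apply: gK y_fx; apply: mem_head.
by move: x_s; rewrite -gy_x gy_z z_s.
Qed.

Lemma trees_uniq n : uniq (trees n.+1).
Proof.
elim: n => // n IHn; rewrite treesSS.
have new_label u : u \in trees n.+1 -> n.+2 \notin leaves u.
  by rewrite mem_trees => /in_Tn_leaves->; rewrite ltnn andbF.
apply: (flatten_map_uniq (g := prune n.+2)) => // u /new_label m_u.
- exact: graft_uniq.
- by move=> t; apply: prune_graft.
Qed.

Lemma enum_Tn_trees n : enum_Tn n.+1 (trees n.+1).
Proof. by split; [exact: trees_uniq | exact: mem_trees]. Qed.

Lemma depth_lt_size x t : depth x t < size (leaves t).
Proof.
elim: t => [a|l IHl r IHr] //=; rewrite size_cat.
by case: ifP => _; [move: IHl (size_leaves_gt0 r) | move: IHr (size_leaves_gt0 l)]; lia.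
Qed.

Lemma depth_lt_in_Tn n t x : in_Tn n t -> depth x t < n.
Proof. by case/andP=> /perm_size size_t _; rewrite -(size_iota 1 n) -size_t depth_lt_size. Qed.

Lemma dfact_double_predS n : dfact (2 * n.+1).-1 = (2 * n).+1 * dfact (2 * n).-1.
Proof. by rewrite mulnS; case: n. Qed.

Lemma dfact_doubleS n : dfact (2 * n.+1) = (2 * n).+2 * dfact (2 * n).
Proof. by rewrite mulnS. Qed.

Lemma sum_dkn_depth n s : {in s, forall t, depth 1 t < n} ->
  \sum_(1 <= k < n) k ^ 2 * dkn s k = \sum_(t <- s) depth 1 t ^ 2.
Proof.
move=> lt_n; under eq_bigr => k _ do rewrite /dkn -sum1_count big_distrr big_mkcond /=.
rewrite exchange_big; apply: eq_big_seq => t /lt_n lt_tn /=.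
under eq_bigr => k _ do rewrite eq_sym muln1.
by rewrite -big_mkcond big_nat1_eq lt_tn andbT; case: (depth 1 t).
Qed.

Local Open Scope ring_scope.

Lemma sum_graft_depth (R : comPzRingType) (F : nat -> R) m x u :
  x \in leaves u -> x != m ->
  \sum_(t <- graft m u) F (depth x t) =
  (depth x u).+1%:R * F (depth x u).+1 +
  ((size (graft m u))%:R - (depth x u).+1%:R) * F (depth x u).
Proof.
elim: u F => [a|l IHl r IHr] F x_u x_m.
  by rewrite /= big_seq1 /= x_u; ring.
have x_graft v t : t \in graft m v -> (x \in leaves t) = (x \in leaves v).
  by move=> t_graft; rewrite (mem_leaves_graft x t_graft) (negbTE x_m) orbF.
rewrite /= big_cons big_cat !big_map /= x_u size_cat !size_map.
case: ifP => x_l;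
  under eq_big_seq => t t_graft do rewrite (x_graft _ _ t_graft) x_l.
- rewrite (IHl (fun k => F k.+1)) // big_const_seq count_predT iter_addr_0.
  rewrite -mulr_natl -!natr1 !natrD; ring.
- have x_r : x \in leaves r by rewrite mem_cat x_l in x_u.
  rewrite (IHr (fun k => F k.+1)) // big_const_seq count_predT iter_addr_0.
  rewrite -mulr_natl -!natr1 !natrD; ring.
Qed.

Definition depth_sum (F : nat -> int) n : int := \sum_(t <- trees n) F (depth 1 t).

Definition moment j n : int := depth_sum (fun k => k%:R ^+ j) n.

Lemma depth_sum_succ F n : depth_sum F n.+2 = \sum_(u <- trees n.+1)
  ((depth 1 u).+1%:R * F (depth 1 u).+1 + (2 * n%:R - (depth 1 u)%:R) * F (depth 1 u)).
Proof.
rewrite /depth_sum treesSS big_flatten big_map; apply: eq_big_seq => u.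
rewrite mem_trees => Tn_u; rewrite sum_graft_depth ?(in_Tn_leaves _ Tn_u) //.
have size_u : size (graft n.+2 u) = (2 * n).+1.
  by have := size_graft n.+2 u; rewrite (perm_size (proj1 (andP Tn_u))) size_iota; lia.
by rewrite size_u -!natr1 natrM; ring.
Qed.

Lemma moment0S n : moment 0 n.+2 = (2 * n%:R + 1) * moment 0 n.+1.
Proof.
by rewrite /moment depth_sum_succ /depth_sum mulr_sumr; apply: eq_bigr => u _; ring.
Qed.

Lemma moment1S n : moment 1 n.+2 = (2 * n%:R + 2) * moment 1 n.+1 + moment 0 n.+1.
Proof.
rewrite /moment depth_sum_succ /depth_sum mulr_sumr -big_split.
by apply: eq_bigr => u _ /=; rewrite -!natr1; ring.
Qed.

Lemma moment2S n : moment 2 n.+2 =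
  (2 * n%:R + 3) * moment 2 n.+1 + 3 * moment 1 n.+1 + moment 0 n.+1.
Proof.
rewrite /moment depth_sum_succ /depth_sum !mulr_sumr -!big_split.
by apply: eq_bigr => u _ /=; rewrite -!natr1; ring.
Qed.

Lemma moments_closed n :
  [/\ moment 0 n.+1 = (dfact (2 * n).-1)%:R,
      moment 1 n.+1 = (dfact (2 * n))%:R - (dfact (2 * n).-1)%:R &
      moment 2 n.+1 = (4 * n%:R + 3) * (dfact (2 * n).-1)%:R - 3 * (dfact (2 * n))%:R].
Proof.
elim: n => [|n [IH0 IH1 IH2]]; first by rewrite /moment /depth_sum /= !big_seq1.
rewrite moment0S moment1S moment2S IH0 IH1 IH2 dfact_double_predS dfact_doubleS.
by rewrite !natrM -!natr1 natrM; split; ring.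
Qed.

Theorem lemma11 (n : nat) (hn : (2 <= n)%N) :
  (exists s, enum_Tn n s) /\
  forall s : seq tree, enum_Tn n s ->
    (\sum_(1 <= k < n) (k ^ 2 * dkn s k)%N)%:Z =
    ((4 * n - 1) * dfact (2 * n - 3))%N%:Z - (3 * dfact (2 * n - 2))%N%:Z.
Proof.
case: n hn => // n _; split=> [|s [uniq_s mem_s]].
  by exists (trees n.+1); apply: enum_Tn_trees.
have [uniq_trees trees_Tn] := enum_Tn_trees n.
have perm_s : perm_eq s (trees n.+1).
  by apply: uniq_perm => // t; rewrite mem_s trees_Tn.
rewrite sum_dkn_depth => [|t]; last by rewrite mem_s; apply: depth_lt_in_Tn.
rewrite (perm_big _ perm_s) -natz natr_sum.
have -> : \sum_(t <- trees n.+1) (depth 1 t ^ 2)%:R = moment 2 n.+1.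
  by apply: eq_bigr => t _; rewrite natrX.
have [_ _ ->] := moments_closed n.
have -> : (4 * n.+1 - 1 = 4 * n + 3)%N by lia.
have -> : (2 * n.+1 - 3 = (2 * n).-1)%N by lia.
have -> : (2 * n.+1 - 2 = 2 * n)%N by lia.
by rewrite -!natz !natrM natrD natrM.
Qed.
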